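(* Let $N>3$. Consider quantum strategies given by: an integer $d\ge1$; the state $|\psi\rangle=\sum_{i=1}^N\sqrt{p_i}\,|i\rangle|\chi\rangle\in\mathbb{C}^N\otimes\mathbb{C}^d$ with $p_i\ge0$, $\sum_ip_i=1$ and $|\chi\rangle\in\mathbb{C}^d$ a unit vector; symmetric encoding unitaries $U_{\mathbf{x}}=\sum_{i=1}^N|i\rangle\langle i|\otimes U^{x_i}$ for a single unitary $U$ on $\mathbb{C}^d$ (i.e. $U_1=\cdots=U_N=U$); and a two-outcome POVM $\{\Pi_0,\Pi_1\}$, giving the behavior $P(a|\mathbf{x})=\langle\psi|U_{\mathbf{x}}^\dagger\Pi_aU_{\mathbf{x}}|\psi\rangle$. Then the maximum over all such strategies (all $d$, $p_i$, $\chi$, $U$, POVMs) of $$\frac{1}{N+1}P(0|0\cdots0)+\frac{1}{N+1}\sum_{k=1}^NP(1|e_k)-\frac{N}{N+1}$$ equals $$\delta_N=\frac{1}{(N+1)(N^2-3N+1)},$$ and this maximum is achieved with $d=2$ and the symmetric input state $p_i=1/N$ for all $i$.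
   Context: $\{|i\rangle\}$ is the standard basis of $\mathbb{C}^N$; $e_k\in\{0,1\}^N$ denotes the bit string with a single $1$ in position $k$ and zeros elsewhere. The quantity $\frac{1}{N+1}P(0|0\cdots0)+\frac{1}{N+1}\sum_kP(1|e_k)\le\frac{N}{N+1}$ is the fingerprinting inequality, which holds for all behaviors generated with $N-1$ classical particles; the displayed difference is its violation. *)

(* Scalars: an arbitrary numClosedFieldType C (e.g. complex R
   for a real closed field R, or algC). *)
From HB Require Import structures.
From mathcomp Require Import all_boot all_order all_algebra.
From mathcomp Require Import mxtens.
Set Implicit Arguments. Unset Strict Implicit. Unset Printing Implicit Defensive.
Import Order.TTheory GRing.Theory Num.Theory.
Local Open Scope ring_scope.

Section Fingerprinting.
Variable C : numClosedFieldType.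

Definition dagger m n (M : 'M[C]_(m, n)) : 'M[C]_(n, m) := (map_mx Num.conj M)^T.

Definition psdmx n (M : 'M[C]_n) : Prop :=
  dagger M = M /\ forall v : 'cV[C]_n, 0 <= (dagger v *m M *m v) 0 0.

Definition ket n (i : 'I_n) : 'cV[C]_n := delta_mx i 0.

Record strategy (N d : nat) := Strategy {
  st_p   : 'I_N -> C;
  st_chi : 'cV[C]_d;
  st_U   : 'M[C]_d;
  st_Pi0 : 'M[C]_(N * d);
  st_Pi1 : 'M[C]_(N * d)
}.

Definition valid_strategy N d (S : strategy N d) : Prop :=
  [/\ (forall i, 0 <= st_p S i) /\ \sum_i st_p S i = 1,
      (dagger (st_chi S) *m st_chi S) 0 0 = 1,
      st_U S \is unitarymx,
      psdmx (st_Pi0 S) /\ psdmx (st_Pi1 S)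
    & st_Pi0 S + st_Pi1 S = 1%:M].

Definition st_psi N d (S : strategy N d) : 'cV[C]_(N * d) :=
  \sum_i sqrtC (st_p S i) *: tensmx (ket i) (st_chi S).

Definition st_Ux N d (S : strategy N d) (x : 'I_N -> bool) : 'M[C]_(N * d) :=
  \sum_i tensmx (ket i *m dagger (ket i)) (st_U S ^+ x i).

Definition behavior N d (S : strategy N d) (a : bool) (x : 'I_N -> bool) : C :=
  (dagger (st_psi S) *m dagger (st_Ux S x) *m (if a then st_Pi1 S else st_Pi0 S)
     *m st_Ux S x *m st_psi S) 0 0.

Definition x0 N : 'I_N -> bool := fun _ => false.
Definition ek N (k : 'I_N) : 'I_N -> bool := fun j => j == k.

Definition violation N d (S : strategy N d) : C :=
  (N.+1%:R)^-1 * behavior S false (@x0 N)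
  + (N.+1%:R)^-1 * \sum_k behavior S true (ek k)
  - N%:R / N.+1%:R.

Definition deltaN (N : nat) : C :=
  ((N.+1%:R) * (N%:R ^+ 2 - 3 * N%:R + 1))^-1.

End Fingerprinting.

From HB Require Import structures.
From mathcomp Require Import all_boot all_order all_algebra.
From mathcomp Require Import mxtens ring.
Import Order.TTheory GRing.Theory Num.Theory.
Local Open Scope ring_scope.
Set Implicit Arguments. Unset Strict Implicit. Unset Printing Implicit Defensive.

(* Write q(v) = <v|Pi_0|v>, psi for the input state, F_k = U_{e_k} psi and
   b = U_{1...1} psi. Normalisation of the U_x psi and Pi_1 = 1 - Pi_0 give
   (N+1) violation = q(psi) - sum_k q(F_k), and sum_k F_k = (N-1) psi + b.
   Convexity of the positive form q gives sum_k q(F_k) >= q((N-1) psi + b)/N,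
   and with m = N^2 - 3N + 1 one has the exact identity
     q(psi) - q((N-1) psi + b)/N = q(b)/m - q(m psi + (N-1) b)/(N m),
   which is at most q(b)/m <= 1/m because Pi_0 <= 1.
   All three inequalities are tight in dimension 2 for Pi_0 = |b><b| and a real
   rotation U with <chi|U|chi> = -(N-1)/m: then m psi + (N-1) b is orthogonal
   to b. Such a rotation exists iff N - 1 <= m, i.e. N >= 4. *)

Section Matrices.
Variable C : numClosedFieldType.
Implicit Types m n p q : nat.

Lemma daggerD m n (A B : 'M[C]_(m, n)) : dagger (A + B) = dagger A + dagger B.
Proof. by apply/matrixP=> i j; rewrite !mxE rmorphD. Qed.

Lemma daggerB m n (A B : 'M[C]_(m, n)) : dagger (A - B) = dagger A - dagger B.
Proof. by apply/matrixP=> i j; rewrite !mxE rmorphB. Qed.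

Lemma daggerZ m n (a : C) (A : 'M[C]_(m, n)) : dagger (a *: A) = a^* *: dagger A.
Proof. by apply/matrixP=> i j; rewrite !mxE rmorphM. Qed.

Lemma dagger_sum m n (I : finType) (F : I -> 'M[C]_(m, n)) :
  dagger (\sum_i F i) = \sum_i dagger (F i).
Proof.
apply/matrixP=> i j; rewrite !mxE !summxE rmorph_sum.
by apply: eq_bigr => k _; rewrite !mxE.
Qed.

Lemma daggerM m n p (A : 'M[C]_(m, n)) (B : 'M[C]_(n, p)) :
  dagger (A *m B) = dagger B *m dagger A.
Proof. by rewrite /dagger map_mxM trmx_mul. Qed.

Lemma daggerK m n (A : 'M[C]_(m, n)) : dagger (dagger A) = A.
Proof. by apply/matrixP=> i j; rewrite !mxE conjCK. Qed.

Lemma dagger1 n : dagger (1%:M : 'M[C]_n) = 1%:M.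
Proof. by rewrite /dagger map_mx1 trmx1. Qed.

Lemma daggerT m n p q (A : 'M[C]_(m, n)) (B : 'M[C]_(p, q)) :
  dagger (A *t B) = dagger A *t dagger B.
Proof. by rewrite /dagger map_mxT trmx_tens. Qed.

Lemma dagger_ket n (i : 'I_n) : dagger (ket C i) = delta_mx 0 i.
Proof. by apply/matrixP=> a b; rewrite !mxE conjC_nat andbC. Qed.

Lemma unitarymx_daggerK n (U : 'M[C]_n) :
  U \is unitarymx -> dagger U *m U = 1%:M.
Proof. by move=> hU; have := mulmxKtV 1%:M hU erefl; rewrite mul1mx -map_trmx. Qed.

Lemma unitarymx_exp_daggerK n (U : 'M[C]_n) (b : bool) :
  U \is unitarymx -> dagger (U ^+ b) *m U ^+ b = 1%:M.
Proof.
by case: b => /= hU; [rewrite expr1 unitarymx_daggerK | rewrite expr0 dagger1 mul1mx].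
Qed.

Lemma mx11_mul (A B : 'M[C]_1) : (A *m B) 0 0 = A 0 0 * B 0 0.
Proof. by rewrite mxE big_ord1. Qed.

Lemma dotC n (u v : 'cV[C]_n) : (dagger u *m v) 0 0 = ((dagger v *m u) 0 0)^*.
Proof.
rewrite !mxE rmorph_sum; apply: eq_bigr => j _.
by rewrite !mxE rmorphM /= conjCK mulrC.
Qed.

Lemma dot_ge0 n (u : 'cV[C]_n) : 0 <= (dagger u *m u) 0 0.
Proof. by rewrite mxE; apply: sumr_ge0 => j _; rewrite !mxE mulrC mul_conjC_ge0. Qed.

Lemma ket_dotl n (i : 'I_n) (v : 'cV[C]_n) : (dagger (ket C i) *m v) 0 0 = v i 0.
Proof. by rewrite dagger_ket -rowE mxE. Qed.

Lemma ket_dot n (i j : 'I_n) :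
  dagger (ket C i) *m ket C j = ((i == j)%:R : C)%:M.
Proof.
by apply/matrixP=> a b; rewrite [a]ord1 [b]ord1 ket_dotl !mxE eqxx andbT.
Qed.

Lemma tensmxDr m n p q (A : 'M[C]_(m, n)) (B B' : 'M[C]_(p, q)) :
  A *t (B + B') = A *t B + A *t B'.
Proof. by apply/matrixP=> i j; rewrite !mxE mulrDr. Qed.

Lemma tensmxZr m n p q (A : 'M[C]_(m, n)) (c : C) (B : 'M[C]_(p, q)) :
  A *t (c *: B) = c *: (A *t B).
Proof. by apply/matrixP=> i j; rewrite !mxE mulrCA. Qed.

Lemma tensmx_sumr m n p q (I : finType) (A : 'M[C]_(m, n)) (F : I -> 'M[C]_(p, q)) :
  A *t (\sum_i F i) = \sum_i A *t F i.
Proof.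
apply/matrixP=> i j; rewrite !mxE !summxE mulr_sumr.
by apply: eq_bigr => k _; rewrite !mxE.
Qed.

Lemma tensmx11 (A B : 'M[C]_1) : (A *t B) 0 0 = A 0 0 * B 0 0.
Proof.
have -> : (0 : 'I_(1 * 1)) = mxtens_index (0, 0) by apply: val_inj.
by rewrite tensmxE; congr (A _ _ * B _ _); apply: val_inj.
Qed.

Lemma tensmx_mulc m n p q (A : 'M[C]_(m, n)) (B : 'M[C]_(p, q))
    (u : 'cV[C]_n) (v : 'cV[C]_q) :
  (A *t B) *m (u *t v : 'cV_(n * q)) = ((A *m u) *t (B *m v) : 'cV_(m * p)).
Proof. exact: (tensmx_mul A B u v). Qed.

Lemma tens_dot n d (a b : 'cV[C]_n) (u v : 'cV[C]_d) :
  (dagger (a *t u : 'cV_(n * d)) *m (b *t v : 'cV_(n * d))) 0 0 =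
  (dagger a *m b) 0 0 * (dagger u *m v) 0 0.
Proof.
have -> : dagger (a *t u : 'cV_(n * d)) = (dagger a *t dagger u : 'rV_(n * d)).
  exact: (daggerT a u).
have -> : (dagger a *t dagger u : 'rV_(n * d)) *m (b *t v : 'cV_(n * d)) =
    (dagger a *m b) *t (dagger u *m v) by exact: (tensmx_mul (dagger a) (dagger u) b v).
by rewrite tensmx11.
Qed.

End Matrices.

Section BlockVectors.
Variable C : numClosedFieldType.

Definition bvec N d (v : 'I_N -> 'cV[C]_d) : 'cV[C]_(N * d) :=
  \sum_i ket C i *t v i.

Definition bdiag N d (X : 'I_N -> 'M[C]_d) : 'M[C]_(N * d) :=
  \sum_i (ket C i *m dagger (ket C i)) *t X i.

Variables N d : nat.
Implicit Types (u v : 'I_N -> 'cV[C]_d) (X : 'I_N -> 'M[C]_d).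

Lemma eq_bvec u v : (forall i, u i = v i) -> bvec u = bvec v.
Proof. by move=> uv; apply: eq_bigr => i _; rewrite uv. Qed.

Lemma bvecD u v : bvec (fun i => u i + v i) = bvec u + bvec v.
Proof. by rewrite /bvec -big_split; apply: eq_bigr => i _; rewrite tensmxDr. Qed.

Lemma bvecZ (c : C) u : bvec (fun i => c *: u i) = c *: bvec u.
Proof. by rewrite /bvec scaler_sumr; apply: eq_bigr => i _; rewrite tensmxZr. Qed.

Lemma bvec_sum (I : finType) (F : I -> 'I_N -> 'cV[C]_d) :
  bvec (fun i => \sum_k F k i) = \sum_k bvec (F k).
Proof. by rewrite /bvec exchange_big; apply: eq_bigr => i _; rewrite tensmx_sumr. Qed.

Lemma bdiag_bvec X v : bdiag X *m bvec v = bvec (fun i => X i *m v i).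
Proof.
rewrite /bdiag /bvec mulmx_suml; apply: eq_bigr => i _.
rewrite mulmx_sumr (bigD1 i) //= big1 => [|j ji].
  by rewrite tensmx_mulc -mulmxA ket_dot eqxx mul_mx_scalar scale1r addr0.
by rewrite tensmx_mulc -mulmxA ket_dot eq_sym (negbTE ji) mul_mx_scalar scale0r tens0mx.
Qed.

Lemma bvec_dot u v :
  (dagger (bvec u) *m bvec v) 0 0 = \sum_i (dagger (u i) *m v i) 0 0.
Proof.
rewrite /bvec dagger_sum mulmx_suml summxE; apply: eq_bigr => i _.
rewrite mulmx_sumr summxE (bigD1 i) //= big1 => [|j ji].
  by rewrite tens_dot ket_dot eqxx !mxE /= mul1r addr0.
by rewrite tens_dot ket_dot eq_sym (negbTE ji) !mxE /= mul0r.
Qed.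

Definition wbvec (p : 'I_N -> C) (f : 'I_N -> 'cV[C]_d) : 'cV[C]_(N * d) :=
  bvec (fun i => sqrtC (p i) *: f i).

Implicit Types (p : 'I_N -> C) (f g : 'I_N -> 'cV[C]_d).

Lemma wbvecD p f g : wbvec p f + wbvec p g = wbvec p (fun i => f i + g i).
Proof. by rewrite /wbvec -bvecD; apply: eq_bvec => i; rewrite scalerDr. Qed.

Lemma wbvecZ p (c : C) f : c *: wbvec p f = wbvec p (fun i => c *: f i).
Proof. by rewrite /wbvec -bvecZ; apply: eq_bvec => i; rewrite !scalerA mulrC. Qed.

Lemma wbvec_sum p (I : finType) (G : I -> 'I_N -> 'cV[C]_d) :
  \sum_k wbvec p (G k) = wbvec p (fun i => \sum_k G k i).
Proof. by rewrite /wbvec -bvec_sum; apply: eq_bvec => i; rewrite scaler_sumr. Qed.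

Lemma bdiag_wbvec X p f : bdiag X *m wbvec p f = wbvec p (fun i => X i *m f i).
Proof. by rewrite bdiag_bvec; apply: eq_bvec => i; rewrite scalemxAr. Qed.

Lemma wbvec_dot p f g : (forall i, 0 <= p i) ->
  (dagger (wbvec p f) *m wbvec p g) 0 0 = \sum_i p i * (dagger (f i) *m g i) 0 0.
Proof.
move=> p_ge0; rewrite bvec_dot; apply: eq_bigr => i _.
rewrite daggerZ -scalemxAr -scalemxAl !mxE (conj_Creal (sqrtC_real (p_ge0 i))).
by rewrite mulrA -expr2 sqrtCK.
Qed.

End BlockVectors.

Section Forms.
Variable C : numClosedFieldType.

Definition sform n (P : 'M[C]_n) (u v : 'cV[C]_n) : C := (dagger u *m P *m v) 0 0.
Definition qform n (P : 'M[C]_n) (u : 'cV[C]_n) : C := sform P u u.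

Variables (n : nat) (P : 'M[C]_n).
Implicit Types (u v : 'cV[C]_n) (a b c : C).

Lemma sformDl u u' v : sform P (u + u') v = sform P u v + sform P u' v.
Proof. by rewrite /sform daggerD !mulmxDl mxE. Qed.

Lemma sformDr u v v' : sform P u (v + v') = sform P u v + sform P u v'.
Proof. by rewrite /sform mulmxDr mxE. Qed.

Lemma sformZl c u v : sform P (c *: u) v = c^* * sform P u v.
Proof. by rewrite /sform daggerZ -!scalemxAl mxE. Qed.

Lemma sformZr c u v : sform P u (c *: v) = c * sform P u v.
Proof. by rewrite /sform -!scalemxAr mxE. Qed.

Lemma sform_suml (I : finType) (F : I -> 'cV[C]_n) v :
  sform P (\sum_k F k) v = \sum_k sform P (F k) v.
Proof. by rewrite /sform dagger_sum !mulmx_suml summxE. Qed.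

Lemma sform_sumr (I : finType) (F : I -> 'cV[C]_n) u :
  sform P u (\sum_k F k) = \sum_k sform P u (F k).
Proof. by rewrite /sform mulmx_sumr summxE. Qed.

Lemma qformDZ a b u v : qform P (a *: u + b *: v) =
  a^* * a * qform P u + b^* * b * qform P v
  + a^* * b * sform P u v + b^* * a * sform P v u.
Proof. by rewrite /qform !(sformDl, sformDr, sformZl, sformZr); ring. Qed.

Lemma qformZB a u v : qform P (a *: u - v) =
  a^* * a * qform P u - a^* * sform P u v - a * sform P v u + qform P v.
Proof. by rewrite -scaleN1r qformDZ rmorphN1; ring. Qed.

Lemma qform_sum_le (I : finType) (F : I -> 'cV[C]_n) : psdmx P ->
  qform P (\sum_i F i) <= #|I|%:R * \sum_i qform P (F i).
Proof.
move=> [_ P_ge0]; have [I0 | I_gt0] := posnP #|I|.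
  rewrite big1 => [|i]; last by have := card0_eq I0 i; rewrite !inE.
  by rewrite I0 mul0r /qform /sform mulmx0 mxE.
set s := \sum_i F i.
have expand : \sum_j qform P (#|I|%:R *: F j - s) =
    #|I|%:R * (#|I|%:R * \sum_i qform P (F i) - qform P s).
  under eq_bigr do rewrite qformZB conjC_nat.
  rewrite big_split /= !sumrB -!mulr_sumr -sform_suml -sform_sumr sumr_const -mulr_natl.
  rewrite /qform; ring.
have : 0 <= \sum_j qform P (#|I|%:R *: F j - s) by apply: sumr_ge0 => j _; apply: P_ge0.
by rewrite expand pmulr_rge0 ?ltr0n // subr_ge0.
Qed.

End Forms.

Section PositiveForms.
Variable C : numClosedFieldType.
Implicit Types (n : nat).

Lemma sform1 n (u v : 'cV[C]_n) : sform 1%:M u v = (dagger u *m v) 0 0.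
Proof. by rewrite /sform mulmx1. Qed.

Lemma qformBl n (A B : 'M[C]_n) v : qform (A - B) v = qform A v - qform B v.
Proof. by rewrite /qform /sform mulmxBr mulmxBl !mxE. Qed.

Lemma qform_rank1 n (b v : 'cV[C]_n) :
  qform (b *m dagger b) v = ((dagger b *m v) 0 0)^* * (dagger b *m v) 0 0.
Proof.
rewrite /qform /sform.
have -> : dagger v *m (b *m dagger b) *m v = (dagger v *m b) *m (dagger b *m v).
  by rewrite !mulmxA.
by rewrite mx11_mul (dotC v b).
Qed.

Lemma psd_rank1 n (b : 'cV[C]_n) : psdmx (b *m dagger b).
Proof.
split=> [|v]; first by rewrite daggerM daggerK.
by rewrite -[X in 0 <= X]/(qform _ v) qform_rank1 mulrC mul_conjC_ge0.
Qed.

Lemma psd_1_rank1 n (b : 'cV[C]_n) : (dagger b *m b) 0 0 = 1 ->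
  psdmx (1%:M - b *m dagger b).
Proof.
move=> b_norm; split=> [|v]; first by rewrite daggerB dagger1 daggerM daggerK.
rewrite -[X in 0 <= X]/(qform _ v) qformBl qform_rank1 /qform sform1.
set c := (dagger b *m v) 0 0.
(* Cauchy-Schwarz: since |b| = 1, |v|^2 - |c|^2 = |c b - v|^2. *)
have -> : (dagger v *m v) 0 0 - c^* * c = qform 1%:M (c *: b - v).
  by rewrite qformZB /qform !sform1 b_norm (dotC v b) -/c; ring.
by rewrite /qform sform1 dot_ge0.
Qed.

Lemma qform_fingerprint_le n (P : 'M[C]_n) (k : C) (psi b : 'cV[C]_n) :
  psdmx P -> 0 < k -> 0 < k ^+ 2 - 3 * k + 1 -> qform P b <= 1 ->
  qform P psi - k^-1 * qform P ((k - 1) *: psi + b) <= (k ^+ 2 - 3 * k + 1)^-1.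
Proof.
move=> [_ q_ge0] k_gt0; set m := k ^+ 2 - 3 * k + 1 => m_gt0 b_le1.
have conj_km1 : (k - 1)^* = k - 1 by rewrite conj_Creal // rpredB ?gtr0_real.
have conj_m : m^* = m by rewrite conj_Creal ?gtr0_real.
have -> : qform P psi - k^-1 * qform P ((k - 1) *: psi + b) =
    qform P b / m - qform P (m *: psi + (k - 1) *: b) / (k * m).
  rewrite -[b in _ *: psi + b]scale1r !qformDZ conj_km1 conj_m rmorph1.
  have m_neq0 : m != 0 by rewrite gt_eqF.
  by move: m_neq0; rewrite /m => m_neq0; field; rewrite m_neq0 gt_eqF.
apply: (@le_trans _ _ (qform P b / m)).
  by rewrite gerBl divr_ge0 ?q_ge0 // mulr_ge0 // ltW.
by rewrite -[leRHS]mul1r ler_wpM2r // invr_ge0 ltW.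
Qed.

End PositiveForms.

Lemma fingerprint_denom_gt0 (C : numClosedFieldType) N :
  (2 < N)%N -> 0 < (N%:R ^+ 2 - 3 * N%:R + 1 : C).
Proof.
move=> N_gt2; have [c ->] : exists c, N = (c + 3)%N by exists (N - 3)%N; rewrite subnK.
have -> : ((c + 3)%:R ^+ 2 - 3 * (c + 3)%:R + 1 : C) = (c * c + 3 * c + 1)%:R.
  by rewrite !natrD !natrM; ring.
by rewrite ltr0n addn1.
Qed.

Section StrategyFacts.
Variables (C : numClosedFieldType) (N d : nat) (S : strategy C N d).
Hypothesis S_valid : valid_strategy S.

Lemma st_psiE : st_psi S = wbvec (st_p S) (fun _ => st_chi S).
Proof. by apply: eq_bigr => i _; rewrite tensmxZr. Qed.

Lemma Ux_psiE x : st_Ux S x *m st_psi S =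
  wbvec (st_p S) (fun i => st_U S ^+ x i *m st_chi S).
Proof. by rewrite st_psiE; apply: bdiag_wbvec. Qed.

Lemma Ux_psi_norm x :
  (dagger (st_Ux S x *m st_psi S) *m (st_Ux S x *m st_psi S)) 0 0 = 1.
Proof.
have [[p_ge0 p_sum1] chi_norm U_unitary _ _] := S_valid.
rewrite Ux_psiE wbvec_dot //.
under eq_bigr do rewrite daggerM mulmxA -(mulmxA (dagger _))
  unitarymx_exp_daggerK // mulmx1 chi_norm mulr1.
exact: p_sum1.
Qed.

Lemma qform_Pi1 v :
  qform (st_Pi1 S) v = (dagger v *m v) 0 0 - qform (st_Pi0 S) v.
Proof.
have [_ _ _ _ Pi_sum1] := S_valid.
have -> : st_Pi1 S = 1%:M - st_Pi0 S by rewrite -Pi_sum1 addrC addKr.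
by rewrite qformBl /qform sform1.
Qed.

Lemma behaviorE a x : behavior S a x =
  qform (if a then st_Pi1 S else st_Pi0 S) (st_Ux S x *m st_psi S).
Proof. by rewrite /behavior /qform /sform daggerM !mulmxA. Qed.

Lemma violationE : violation S =
  (qform (st_Pi0 S) (st_psi S)
   - \sum_k qform (st_Pi0 S) (st_Ux S (ek k) *m st_psi S)) / (N%:R + 1).
Proof.
have U0_psi : st_Ux S (@x0 N) *m st_psi S = st_psi S.
  by rewrite Ux_psiE st_psiE; apply: eq_bvec => i; rewrite /x0 expr0 mul1mx.
rewrite /violation behaviorE /= U0_psi.
under eq_bigr do rewrite behaviorE /= qform_Pi1 Ux_psi_norm.
rewrite sumrB sumr_const card_ord -natr1.
by field; rewrite natr1 pnatr_eq0.
Qed.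

Lemma sum_Uek_psi : (0 < N)%N -> \sum_k st_Ux S (ek k) *m st_psi S =
  (N%:R - 1) *: st_psi S + st_Ux S (fun _ => true) *m st_psi S.
Proof.
move=> N_gt0; under eq_bigr do rewrite Ux_psiE.
rewrite Ux_psiE st_psiE wbvec_sum wbvecZ wbvecD; apply: eq_bvec => i.
congr (_ *: _); rewrite (bigD1 i) //= /ek eqxx addrC; congr (_ + _).
under eq_bigr => j ji do rewrite eq_sym (negbTE ji) expr0 mul1mx.
by rewrite sumr_const cardC1 card_ord -scaler_nat -subn1 natrB.
Qed.

Lemma violation_le : (2 < N)%N -> violation S <= deltaN C N.
Proof.
move=> N_gt2; have [_ _ _ [Pi0_psd [_ Pi1_ge0]] _] := S_valid.
have N_gt0 : (0 < N)%N by apply: ltn_trans N_gt2.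
set b := st_Ux S (fun _ => true) *m st_psi S.
have b_le1 : qform (st_Pi0 S) b <= 1.
  have := Pi1_ge0 b.
  by rewrite -[X in 0 <= X]/(qform _ b) qform_Pi1 Ux_psi_norm subr_ge0.
have convex := qform_sum_le (fun k => st_Ux S (ek k) *m st_psi S) Pi0_psd.
rewrite card_ord sum_Uek_psi // in convex.
have k_gt0 : 0 < (N%:R : C) by rewrite ltr0n.
have key := qform_fingerprint_le (st_psi S) Pi0_psd k_gt0
  (fingerprint_denom_gt0 C N_gt2) b_le1.
rewrite violationE /deltaN -natr1 invfM [leRHS]mulrC.
apply: ler_wpM2r; first by rewrite invr_ge0 ltW // ltr_pwDr.
by apply: le_trans key; rewrite lerD2l lerN2 ler_pdivrMl.
Qed.

End StrategyFacts.

Section Rotation.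
Variable C : numClosedFieldType.

Definition rotmx (c s : C) : 'M[C]_2 :=
  \matrix_(i, j) if i == j then c else if i == 0 then - s else s.

Lemma rotmx_unitary c s : c \is Num.real -> s \is Num.real ->
  c ^+ 2 + s ^+ 2 = 1 -> rotmx c s \is unitarymx.
Proof.
move=> c_real s_real cs1; apply/unitarymxP/matrixP => i j.
rewrite !mxE !big_ord_recl big_ord0 !mxE.
have [conj_c conj_s] := (conj_Creal c_real, conj_Creal s_real).
by case: i => [[|[|i]] hi] //; case: j => [[|[|j]] hj] //=;
  rewrite ?rmorphN /= ?conj_c ?conj_s -?cs1; ring.
Qed.

Lemma rotmx_dot_ket0 c s : c \is Num.real ->
  (dagger (rotmx c s *m ket C 0) *m ket C 0) 0 0 = c.
Proof. by move=> c_real; rewrite dotC ket_dotl -colE !mxE conj_Creal. Qed.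

End Rotation.

Lemma pred_le_fingerprint_denom (C : numClosedFieldType) N :
  (3 < N)%N -> (N%:R - 1 : C) <= N%:R ^+ 2 - 3 * N%:R + 1.
Proof.
move=> N_gt3; have [c ->] : exists c, N = (c + 4)%N by exists (N - 4)%N; rewrite subnK.
rewrite -subr_ge0.
have -> : ((c + 4)%:R ^+ 2 - 3 * (c + 4)%:R + 1 - ((c + 4)%:R - 1) : C) =
    (c * c + 4 * c + 2)%:R by rewrite !natrD !natrM; ring.
by rewrite ler0n.
Qed.

Section Optimum.
Variables (C : numClosedFieldType) (N : nat).
Hypothesis N_gt3 : (3 < N)%N.

Let k : C := N%:R.
Let m : C := k ^+ 2 - 3 * k + 1.
Let z : C := - (k - 1) / m.
Let w : C := sqrtC (1 - z ^+ 2).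

Let k_gt0 : 0 < k. Proof. by rewrite ltr0n; apply: ltn_trans N_gt3. Qed.
Let m_gt0 : 0 < m. Proof. by apply: fingerprint_denom_gt0; apply: ltnW. Qed.
Let z_real : z \is Num.real.
Proof. by rewrite rpredM ?rpredN ?rpredV ?rpredB ?gtr0_real. Qed.

Let sqr_z_le1 : 0 <= 1 - z ^+ 2.
Proof.
have km1_ge0 : 0 <= k - 1 by rewrite subr_ge0 ler1n; apply: ltn_trans N_gt3.
have -> : 1 - z ^+ 2 = (m - (k - 1)) * (m + (k - 1)) / m ^+ 2.
  by rewrite /z; field; rewrite gt_eqF.
apply: divr_ge0; last by rewrite exprn_ge0 ?ltW.
rewrite mulr_ge0 //; last by rewrite addr_ge0 // ltW.
by rewrite subr_ge0; apply: pred_le_fingerprint_denom.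
Qed.

Let sqr_z_add_sqr_w : z ^+ 2 + w ^+ 2 = 1.
Proof. by rewrite sqrtCK addrC subrK. Qed.

Definition opt_b : 'cV[C]_(N * 2) :=
  wbvec (fun _ => k^-1) (fun _ => rotmx z w *m ket C 0).

Definition opt_strategy : strategy C N 2 :=
  Strategy (fun _ => k^-1) (ket C 0) (rotmx z w)
    (opt_b *m dagger opt_b) (1%:M - opt_b *m dagger opt_b).

Let p_ge0 : forall i, 0 <= st_p opt_strategy i.
Proof. by move=> i; rewrite invr_ge0 ltW. Qed.

Let U_unitary : rotmx z w \is unitarymx.
Proof. exact: rotmx_unitary z_real (sqrtC_real sqr_z_le1) sqr_z_add_sqr_w. Qed.

Let sum_p : \sum_(i < N) k^-1 = 1.
Proof. by rewrite sumr_const card_ord -mulr_natl mulfV ?gt_eqF. Qed.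

Let Uket0_norm : (dagger (rotmx z w *m ket C 0) *m (rotmx z w *m ket C 0)) 0 0 = 1.
Proof.
by rewrite daggerM mulmxA -(mulmxA (dagger _)) unitarymx_daggerK // mulmx1
  ket_dotl mxE.
Qed.

Lemma opt_strategy_valid : valid_strategy opt_strategy.
Proof.
split=> //=; first by rewrite ket_dotl mxE.
split; first exact: psd_rank1.
apply: psd_1_rank1; rewrite wbvec_dot //.
by under eq_bigr do rewrite Uket0_norm mulr1.
by rewrite addrC subrK.
Qed.

Lemma opt_violation : violation opt_strategy = deltaN C N.
Proof.
have N_gt0 : (0 < N)%N by apply: ltn_trans N_gt3.
have b_psi : (dagger opt_b *m st_psi opt_strategy) 0 0 = z.
  rewrite st_psiE /opt_b wbvec_dot //=.
  under eq_bigr do rewrite rotmx_dot_ket0 //.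
  by rewrite -mulr_suml sum_p mul1r.
pose c := k^-1 * (1 + (k - 1) * z).
have b_F j :
    (dagger opt_b *m (st_Ux opt_strategy (ek j) *m st_psi opt_strategy)) 0 0 = c.
  rewrite Ux_psiE /opt_b wbvec_dot //= (bigD1 j) //= /ek eqxx expr1 Uket0_norm.
  under eq_bigr => i ij do rewrite (negbTE ij) expr0 mul1mx rotmx_dot_ket0 //.
  by rewrite sumr_const cardC1 card_ord -mulr_natr -subn1 natrB // mulr1 -/k /c; ring.
have c_real : c \is Num.real.
  apply: rpredM; first by rewrite rpredV gtr0_real.
  by rewrite rpredD ?real1 // rpredM // rpredB ?real1 // gtr0_real.
rewrite (violationE opt_strategy_valid) /= qform_rank1 b_psi conj_Creal //.
under eq_bigr do rewrite qform_rank1 b_F conj_Creal //.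
rewrite sumr_const card_ord /deltaN -natr1 -/k -mulr_natr -/k /c /z.
have m_neq0 : m != 0 by rewrite gt_eqF.
move: m_neq0; rewrite /m => m_neq0.
by field; rewrite m_neq0 !gt_eqF ?addr_gt0.
Qed.

End Optimum.

Unset Implicit Arguments.

Theorem theorem1 (C : numClosedFieldType) (N : nat) (hN : (3 < N)%N) :
  (forall (d : nat) (S : strategy C N d), (0 < d)%N -> valid_strategy S ->
     violation S <= deltaN C N)
  /\ (exists S : strategy C N 2,
        [/\ valid_strategy S,
            (forall i, st_p S i = (N%:R)^-1)
          & violation S = deltaN C N]).
Proof.
split=> [d S _ S_valid | ]; first exact: violation_le S_valid (ltnW hN).
exists (opt_strategy C N).
by split; [exact: opt_strategy_valid hN | | exact: opt_violation hN].
Qed.
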